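(* For the generalized one-way trading problem (GOT) with capacity $C$ and bounds $0<L\le U$, $\theta=U/L$, under Assumption A, the optimal competitive ratio (the smallest competitive ratio achievable by an online algorithm) is $1+\ln\theta$.
   Context: GOT: a single knapsack of capacity $C$; items $n=1,\dots,N$ arrive one at a time. Item $n$ has a size $D_n>0$ and a value function $g_n:[0,D_n]\to\mathbb{R}_{\ge0}$, revealed on arrival. The offline problem is $\max\sum_n g_n(y_n)$ subject to $\sum_n y_n\le C$, $0\le y_n\le D_n$. Assumption A: each $g_n$ is non-decreasing, differentiable and concave, $g_n(0)=0$, and $L\le g_n'\le U$, with $L,U,C$ known in advance. An online algorithm irrevocably chooses $y_n$ upon arrival of item $n$ using only items $1,\dots,n$ and $C,L,U$, keeping the constraints feasible. Its competitive ratio is $\sup_{\mathcal I}\mathrm{OPT}(\mathcal I)/\mathrm{ALG}(\mathcal I)$ over all instances satisfying Assumption A. *)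

From Stdlib Require Import Reals List.
Open Scope R_scope.

(** An item: its size D_n and its value function g_n (only its values on
    [0, D_n] are meaningful). *)
Definition item : Type := (R * (R -> R))%type.

Definition dflt_item : item := (1, fun _ => 0).

Fixpoint rsum (f : nat -> R) (n : nat) : R :=
  match n with
  | O => 0
  | S k => rsum f k + f k
  end.

(** Assumption A for one item (D, g): D > 0; g : [0,D] -> R_{>=0} with
    g(0) = 0, non-decreasing, concave, differentiable on [0,D] (one-sided at
    the endpoints, i.e. derivative taken within [0,D]) with L <= g' <= U. *)
Definition assumptionA_item (L U : R) (D : R) (g : R -> R) : Prop :=
  0 < D /\
  g 0 = 0 /\
  (forall x, 0 <= x <= D -> 0 <= g x) /\
  (forall x y, 0 <= x <= D -> 0 <= y <= D -> x <= y -> g x <= g y) /\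
  (forall x y t, 0 <= x <= D -> 0 <= y <= D -> 0 <= t <= 1 ->
      t * g x + (1 - t) * g y <= g (t * x + (1 - t) * y)) /\
  exists g' : R -> R,
    (forall x, 0 <= x <= D ->
       limit1_in (fun z => (g z - g x) / (z - x))
                 (fun z => 0 <= z <= D /\ z <> x) (g' x) x) /\
    (forall x, 0 <= x <= D -> L <= g' x <= U).

Definition valid_instance (L U : R) (I : list item) : Prop :=
  Forall (fun it => assumptionA_item L U (fst it) (snd it)) I.

Definition size_of (I : list item) (n : nat) : R := fst (nth n I dflt_item).
Definition val_of (I : list item) (n : nat) : R -> R := snd (nth n I dflt_item).

Definition offline_feasible (C : R) (I : list item) (y : nat -> R) : Prop :=
  (forall n, (n < length I)%nat -> 0 <= y n <= size_of I n) /\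
  rsum y (length I) <= C.

Definition value (I : list item) (y : nat -> R) : R :=
  rsum (fun n => val_of I n (y n)) (length I).

(** A deterministic online algorithm (for fixed, known C, L, U) maps the
    sequence of items revealed so far (items 1..n, the last being the current
    one) to the irrevocable decision y_n. *)
Definition online_alg : Type := list item -> R.

Definition decision (alg : online_alg) (I : list item) (n : nat) : R :=
  alg (firstn (S n) I).

Definition online_feasible (C L U : R) (alg : online_alg) : Prop :=
  forall I, valid_instance L U I -> offline_feasible C I (decision alg I).

Definition ALG (alg : online_alg) (I : list item) : R := value I (decision alg I).

(** alg is c-competitive: OPT(I) <= c * ALG(I) for every instance, where
    OPT(I) is the supremum of value I y over offline-feasible y. *)
Definition competitive (C L U : R) (alg : online_alg) (c : R) : Prop :=
  forall I, valid_instance L U I ->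
    forall y, offline_feasible C I y -> value I y <= c * ALG alg I.

(* Upper bound: price capacity at [phi w], equal to [L] up to utilisation
   [K = C / (1 + ln (U / L))] and [L e^(w/K - 1)] beyond, so that it reaches
   [U] exactly when the knapsack is full, and give each item the amount [y]
   maximising [g y - (Phi (w + y) - Phi w)], where [Phi] is the
   antiderivative of [phi]. The algorithm then earns at least [Phi W] at final
   utilisation [W], and concavity of the [g]'s turns the choice rule into the
   dual bound [OPT <= ALG - Phi W + C phi W]. Beyond [K] one has
   [Phi W = K phi W], so [OPT <= (C / K) ALG]; below [K] every item is taken
   entirely and [OPT <= ALG].

   Lower bound: present linear items of size [C] whose unit prices
   [L r^j] rise geometrically to [U]. Competitiveness on every prefix gives
   [p_k C <= c (p_0 y_0 + ... + p_k y_k)]; Abel summation of these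
   inequalities against [y_0 + ... + y_m <= C] yields
   [1 + m (1 - 1/r) <= c], which tends to [1 + ln (U / L)] for
   [r = (U / L)^(1/m)] as [m] grows. *)

From Stdlib Require Import Reals List Lra Lia ClassicalEpsilon Classical.
Open Scope R_scope.

(** * Finite sums and elementary inequalities *)

Lemma rsum_le f h n :
  (forall k, (k < n)%nat -> f k <= h k) -> rsum f n <= rsum h n.
Proof.
  induction n as [|n IH]; intros H; simpl; [lra|].
  pose proof (H n ltac:(lia)). pose proof (IH ltac:(intros; apply H; lia)). lra.
Qed.

Lemma rsum_ext f h n :
  (forall k, (k < n)%nat -> f k = h k) -> rsum f n = rsum h n.
Proof.
  induction n as [|n IH]; intros H; simpl; [lra|].
  rewrite (H n ltac:(lia)), IH by (intros; apply H; lia). reflexivity.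
Qed.

Lemma rsum_zero n : rsum (fun _ => 0) n = 0.
Proof. induction n as [|n IH]; simpl; [|rewrite IH]; ring. Qed.

Lemma rsum_plus f h n : rsum (fun k => f k + h k) n = rsum f n + rsum h n.
Proof. induction n as [|n IH]; simpl; [|rewrite IH]; ring. Qed.

Lemma rsum_minus f h n : rsum (fun k => f k - h k) n = rsum f n - rsum h n.
Proof. induction n as [|n IH]; simpl; [|rewrite IH]; ring. Qed.

Lemma rsum_scal c f n : rsum (fun k => c * f k) n = c * rsum f n.
Proof. induction n as [|n IH]; simpl; [|rewrite IH]; ring. Qed.

Lemma rsum_telescope F n : rsum (fun k => F (S k) - F k) n = F n - F O.
Proof. induction n as [|n IH]; simpl; [|rewrite IH]; ring. Qed.

Lemma rsum_indicator (v : nat -> R) j n :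
  (j < n)%nat -> rsum (fun i => if Nat.eqb i j then v i else 0) n = v j.
Proof.
  induction n as [|n IH]; intros Hj; [lia|]. simpl.
  destruct (Nat.eqb_spec n j) as [<-|Hnj].
  - rewrite (rsum_ext _ (fun _ => 0)), rsum_zero; [ring|].
    intros i Hi. destruct (Nat.eqb_spec i n); [lia|reflexivity].
  - rewrite IH by lia. ring.
Qed.

Lemma exp_le_compat u v : u <= v -> exp u <= exp v.
Proof. intros [H|<-]; [apply Rlt_le, exp_increasing, H | lra]. Qed.

Lemma exp_secant u v :
  u <= v -> (v - u) * exp u <= exp v - exp u <= (v - u) * exp v.
Proof.
  intros H.
  pose proof (exp_ineq1_le (v - u)). pose proof (exp_ineq1_le (u - v)).
  assert (exp v = exp u * exp (v - u)) by (rewrite <- exp_plus; f_equal; ring).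
  assert (exp u = exp v * exp (u - v)) by (rewrite <- exp_plus; f_equal; ring).
  pose proof (exp_pos u). pose proof (exp_pos v).
  split; nra.
Qed.

Lemma exp_le_1_add_2x u : 0 <= u <= 1 / 2 -> exp u <= 1 + 2 * u.
Proof.
  intros Hu. pose proof (exp_secant 0 u ltac:(lra)) as [_ H]. rewrite exp_0 in H.
  pose proof (exp_pos u). nra.
Qed.

Lemma pow_exp x n : exp x ^ n = exp (INR n * x).
Proof.
  induction n as [|n IH]; [simpl; rewrite Rmult_0_l, exp_0; reflexivity|].
  change (exp x ^ S n) with (exp x * exp x ^ n).
  rewrite IH, S_INR, <- exp_plus. f_equal. ring.
Qed.

Lemma one_sub_inv_exp_ge x : 0 <= x -> x - x * x <= 1 - / exp x.
Proof.
  intros Hx.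
  assert (/ exp x <= / (1 + x)) by (apply Rinv_le_contravar; [lra | apply exp_ineq1_le]).
  replace (x - x * x) with (1 - / (1 + x) - x * x * x / (1 + x)) by (field; lra).
  assert (0 <= x * x * x / (1 + x)) by (apply Rmult_le_pos; [nra | left; apply Rinv_0_lt_compat; lra]).
  lra.
Qed.

Lemma ln_div_nonneg L U : 0 < L -> L <= U -> 0 <= ln (U / L).
Proof.
  intros HL HLU. rewrite <- ln_1.
  destruct (Req_dec L U) as [<-|Hne].
  - replace (L / L) with 1 by (field; lra). lra.
  - left. apply ln_increasing; [lra|].
    apply Rmult_lt_reg_r with L; [lra|]. replace (U / L * L) with U by (field; lra). lra.
Qed.

Lemma le_of_forall_small_le_add a b M t0 :
  0 < t0 -> 0 <= M -> (forall t, 0 < t <= t0 -> a <= b + M * t) -> a <= b.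
Proof.
  intros Ht0 HM H. destruct (Rle_or_lt a b) as [|Hab]; [assumption|].
  set (t := Rmin t0 ((a - b) / (2 * (M + 1)))).
  assert (Ht : 0 < t) by (apply Rmin_glb_lt; [lra | apply Rdiv_lt_0_compat; lra]).
  assert (HtM : t * (2 * (M + 1)) <= a - b).
  { apply Rle_trans with ((a - b) / (2 * (M + 1)) * (2 * (M + 1))).
    - apply Rmult_le_compat_r; [lra | apply Rmin_r].
    - right. field. lra. }
  pose proof (H t (conj Ht (Rmin_l _ _))). nra.
Qed.

Lemma le_of_forall_nat_le_sub_div x k c :
  0 <= k -> (forall m, (0 < m)%nat -> x - k / INR m <= c) -> x <= c.
Proof.
  intros Hk H. destruct (Rle_or_lt x c) as [|Hcx]; [assumption|].
  destruct (INR_unbounded (k / (x - c))) as [m Hm].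
  assert (0 <= k / (x - c)) by (apply Rmult_le_pos; [lra | left; apply Rinv_0_lt_compat; lra]).
  assert (Hm0 : (0 < m)%nat) by (destruct m; [simpl in Hm; lra | lia]).
  assert (Hmpos : 0 < INR m) by (apply lt_0_INR; lia).
  assert (k / INR m < x - c).
  { apply Rmult_lt_reg_r with (INR m); [lra|].
    replace (k / INR m * INR m) with k by (field; lra).
    apply Rmult_lt_compat_r with (r := x - c) in Hm; [|lra].
    replace (k / (x - c) * (x - c)) with k in Hm by (field; lra). lra. }
  pose proof (H m Hm0). lra.
Qed.

(** * Value functions under Assumption A *)

Section ConcaveSecant.
Variables (D : R) (g g' : R -> R).
Hypothesis g_concave : forall x y t, 0 <= x <= D -> 0 <= y <= D -> 0 <= t <= 1 ->
  t * g x + (1 - t) * g y <= g (t * x + (1 - t) * y).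
Hypothesis g_deriv : forall x, 0 <= x <= D ->
  limit1_in (fun z => (g z - g x) / (z - x)) (fun z => 0 <= z <= D /\ z <> x) (g' x) x.

Lemma concave_secant_mono x t z :
  0 <= x -> x <= t -> t <= z -> z <= D -> x < z ->
  (t - x) * (g z - g x) <= (g t - g x) * (z - x).
Proof.
  intros Hx Hxt Htz HzD Hxz.
  set (l := (t - x) / (z - x)).
  assert (Hlz : l * (z - x) = t - x) by (unfold l; field; lra).
  assert (Hl : 0 <= l <= 1).
  { split; apply Rmult_le_reg_r with (z - x); lra. }
  pose proof (g_concave z x l ltac:(lra) ltac:(lra) Hl) as Hc.
  replace (l * z + (1 - l) * x) with t in Hc by lra.
  nra.
Qed.

(* Both proofs compare the secant over [x, z] with secants over short
   subintervals, whose slopes tend to the derivative at the common endpoint. *)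
Lemma secant_le_deriv_left x z :
  0 <= x -> x < z -> z <= D -> g z - g x <= g' x * (z - x).
Proof.
  intros Hx Hxz HzD.
  destruct (Rle_or_lt (g z - g x) (g' x * (z - x))) as [|Hlt]; [assumption|]. exfalso.
  set (s := (g z - g x) / (z - x)).
  assert (Hs : s * (z - x) = g z - g x) by (unfold s; field; lra).
  assert (Hgs : g' x < s) by (apply Rmult_lt_reg_r with (z - x); lra).
  destruct (g_deriv x ltac:(lra) (s - g' x) ltac:(lra)) as [alp [Halp Hnear]].
  set (t := x + Rmin (alp / 2) (z - x)).
  pose proof (Rmin_l (alp / 2) (z - x)). pose proof (Rmin_r (alp / 2) (z - x)).
  assert (0 < Rmin (alp / 2) (z - x)) by (apply Rmin_glb_lt; lra).
  assert (Hq : Rabs ((g t - g x) / (t - x) - g' x) < s - g' x).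
  { apply Hnear. simpl. unfold R_dist. unfold t.
    rewrite Rabs_right by lra. repeat split; lra. }
  set (q := (g t - g x) / (t - x)) in Hq.
  assert (q * (t - x) = g t - g x) by (unfold q; field; unfold t; lra).
  pose proof (concave_secant_mono x t z Hx ltac:(unfold t; lra) ltac:(unfold t; lra) HzD Hxz).
  assert (s <= q).
  { apply Rmult_le_reg_r with ((t - x) * (z - x)); [unfold t; nra | nra]. }
  apply Rabs_def2 in Hq. lra.
Qed.

Lemma deriv_right_le_secant x z :
  0 <= x -> x < z -> z <= D -> g' z * (z - x) <= g z - g x.
Proof.
  intros Hx Hxz HzD.
  destruct (Rle_or_lt (g' z * (z - x)) (g z - g x)) as [|Hlt]; [assumption|]. exfalso.
  set (s := (g z - g x) / (z - x)).
  assert (Hs : s * (z - x) = g z - g x) by (unfold s; field; lra).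
  assert (Hgs : s < g' z) by (apply Rmult_lt_reg_r with (z - x); lra).
  destruct (g_deriv z ltac:(lra) (g' z - s) ltac:(lra)) as [alp [Halp Hnear]].
  set (t := z - Rmin (alp / 2) (z - x)).
  pose proof (Rmin_l (alp / 2) (z - x)). pose proof (Rmin_r (alp / 2) (z - x)).
  assert (0 < Rmin (alp / 2) (z - x)) by (apply Rmin_glb_lt; lra).
  assert (Hq : Rabs ((g t - g z) / (t - z) - g' z) < g' z - s).
  { apply Hnear. simpl. unfold R_dist. unfold t.
    rewrite Rabs_left by lra. repeat split; lra. }
  set (q := (g t - g z) / (t - z)) in Hq.
  assert (q * (z - t) = g z - g t) by (unfold q; field; unfold t; lra).
  pose proof (concave_secant_mono x t z Hx ltac:(unfold t; lra) ltac:(unfold t; lra) HzD Hxz).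
  assert (q <= s).
  { apply Rmult_le_reg_r with ((z - t) * (z - x)); [unfold t; nra | nra]. }
  apply Rabs_def2 in Hq. lra.
Qed.

End ConcaveSecant.

Lemma assumptionA_secant_bounds L U D g x z :
  assumptionA_item L U D g -> 0 <= x -> x <= z -> z <= D ->
  L * (z - x) <= g z - g x <= U * (z - x).
Proof.
  intros (_ & _ & _ & _ & Hconc & g' & Hder & Hbd) Hx Hxz HzD.
  destruct (Req_dec x z) as [<-|Hne]; [lra|].
  pose proof (secant_le_deriv_left D g g' Hconc Hder x z Hx ltac:(lra) HzD).
  pose proof (deriv_right_le_secant D g g' Hconc Hder x z Hx ltac:(lra) HzD).
  pose proof (Hbd x ltac:(lra)). pose proof (Hbd z ltac:(lra)).
  split; nra.
Qed.

(** * The price of capacity *)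

(* With [K = C / (1 + ln (U / L))], [phi L K] reaches [U] exactly at [w = C];
   [Phi L K] is its antiderivative. *)
Definition phi (L K w : R) : R :=
  if Rle_dec w K then L else L * exp (w / K - 1).

Definition Phi (L K w : R) : R :=
  if Rle_dec w K then L * w else L * K * exp (w / K - 1).

Section Price.
Variables L K : R.
Hypotheses (L_pos : 0 < L) (K_pos : 0 < K).

Lemma phi_flat w : w <= K -> phi L K w = L.
Proof. intros. unfold phi. destruct (Rle_dec w K); lra. Qed.

Lemma Phi_flat w : w <= K -> Phi L K w = L * w.
Proof. intros. unfold Phi. destruct (Rle_dec w K); lra. Qed.

Lemma phi_exp w : K <= w -> phi L K w = L * exp (w / K - 1).
Proof.
  intros H. unfold phi. destruct (Rle_dec w K); [|reflexivity].
  replace w with K by lra. replace (K / K - 1) with 0 by (field; lra).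
  rewrite exp_0. ring.
Qed.

Lemma Phi_eq_mul_phi w : K <= w -> Phi L K w = K * phi L K w.
Proof.
  intros H. rewrite phi_exp by assumption. unfold Phi.
  destruct (Rle_dec w K); [|ring].
  replace w with K by lra. replace (K / K - 1) with 0 by (field; lra).
  rewrite exp_0. ring.
Qed.

Lemma Phi_0 : Phi L K 0 = 0.
Proof. rewrite Phi_flat by lra. ring. Qed.

Lemma phi_ge w : L <= phi L K w.
Proof.
  destruct (Rle_dec w K); [rewrite phi_flat by lra; lra|].
  rewrite phi_exp by lra.
  assert (0 <= w / K - 1).
  { replace (w / K - 1) with ((w - K) / K) by (field; lra).
    apply Rmult_le_pos; [lra | left; apply Rinv_0_lt_compat, K_pos]. }
  pose proof (exp_le_compat 0 (w / K - 1) ltac:(lra)). rewrite exp_0 in *. nra.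
Qed.

Lemma phi_le s t : s <= t -> phi L K s <= phi L K t.
Proof.
  intros Hst. destruct (Rle_dec s K).
  - rewrite (phi_flat s) by lra. apply phi_ge.
  - rewrite !phi_exp by lra. apply Rmult_le_compat_l; [lra|].
    apply exp_le_compat.
    assert (s / K <= t / K) by (apply Rmult_le_compat_r; [left; apply Rinv_0_lt_compat|]; lra).
    lra.
Qed.

Lemma Phi_secant_exp s t : K <= s -> s <= t ->
  (t - s) * phi L K s <= Phi L K t - Phi L K s <= (t - s) * phi L K t.
Proof.
  intros Hs Hst. rewrite !Phi_eq_mul_phi, !phi_exp by lra.
  set (u := s / K - 1). set (v := t / K - 1).
  assert (Huv : t - s = K * (v - u)) by (unfold u, v; field; lra).
  pose proof (exp_secant u v ltac:(nra)) as [H1 H2].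
  rewrite Huv.
  split.
  - replace (K * (v - u) * (L * exp u)) with (K * L * ((v - u) * exp u)) by ring.
    replace (K * (L * exp v) - K * (L * exp u)) with (K * L * (exp v - exp u)) by ring.
    apply Rmult_le_compat_l; nra.
  - replace (K * (v - u) * (L * exp v)) with (K * L * ((v - u) * exp v)) by ring.
    replace (K * (L * exp v) - K * (L * exp u)) with (K * L * (exp v - exp u)) by ring.
    apply Rmult_le_compat_l; nra.
Qed.

Lemma Phi_secant s t : s <= t ->
  (t - s) * phi L K s <= Phi L K t - Phi L K s <= (t - s) * phi L K t.
Proof.
  intros Hst. destruct (Rle_dec t K).
  - rewrite !phi_flat, !Phi_flat by lra. split; right; ring.
  - destruct (Rle_dec s K).
    + pose proof (Phi_secant_exp K t ltac:(lra) ltac:(lra)) as [H1 H2].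
      rewrite (phi_flat K), (Phi_flat K) in * by lra.
      rewrite (phi_flat s), (Phi_flat s) by lra.
      pose proof (phi_ge t). split; nra.
    + apply Phi_secant_exp; lra.
Qed.

Lemma phi_add_le_mul_exp w t : 0 <= t -> phi L K (w + t) <= phi L K w * exp (t / K).
Proof.
  intros Ht.
  assert (0 <= t / K) by (apply Rmult_le_pos; [lra | left; apply Rinv_0_lt_compat, K_pos]).
  pose proof (exp_le_compat 0 (t / K) ltac:(lra)). rewrite exp_0 in *.
  destruct (Rle_dec (w + t) K).
  - rewrite !phi_flat by lra. nra.
  - rewrite (phi_exp (w + t)) by lra. destruct (Rle_dec w K).
    + rewrite phi_flat by lra. apply Rmult_le_compat_l; [lra|]. apply exp_le_compat.
      replace ((w + t) / K - 1) with (t / K + (w - K) / K) by (field; lra).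
      assert ((w - K) / K <= 0).
      { apply Rmult_le_reg_r with K; [lra|]. replace ((w - K) / K * K) with (w - K) by (field; lra). lra. }
      lra.
    + rewrite phi_exp by lra. rewrite Rmult_assoc, <- exp_plus.
      right. do 2 f_equal. field. lra.
Qed.

Lemma phi_add_le w t : 0 <= t <= K / 2 ->
  phi L K (w + t) <= phi L K w + 2 * phi L K w / K * t.
Proof.
  intros Ht. pose proof (phi_add_le_mul_exp w t ltac:(lra)).
  assert (Htk : 0 <= t / K <= 1 / 2).
  { split; [apply Rmult_le_pos; [lra | left; apply Rinv_0_lt_compat, K_pos]|].
    apply Rmult_le_reg_r with K; [lra|]. replace (t / K * K) with t by (field; lra). lra. }
  pose proof (exp_le_1_add_2x _ Htk). pose proof (phi_ge w).
  replace (phi L K w + 2 * phi L K w / K * t) with (phi L K w * (1 + 2 * (t / K))) by (field; lra).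
  apply Rle_trans with (phi L K w * exp (t / K)); [assumption|].
  apply Rmult_le_compat_l; lra.
Qed.

End Price.

(** * The greedy choice *)

Definition clamp (a b x : R) : R := Rmax a (Rmin b x).

Lemma clamp_id a b x : a <= x <= b -> clamp a b x = x.
Proof. intros. unfold clamp, Rmax, Rmin. repeat destruct (Rle_dec _ _); lra. Qed.

Lemma clamp_in a b x : a <= b -> a <= clamp a b x <= b.
Proof. intros. unfold clamp, Rmax, Rmin. repeat destruct (Rle_dec _ _); lra. Qed.

Lemma clamp_lipschitz a b x y : a <= b -> Rabs (clamp a b x - clamp a b y) <= Rabs (x - y).
Proof.
  intros. unfold clamp, Rmax, Rmin.
  repeat destruct (Rle_dec _ _); unfold Rabs; repeat destruct (Rcase_abs _); lra.
Qed.

Section LipschitzMax.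
Variables (h : R -> R) (a b M : R).
Hypotheses (a_le_b : a <= b) (M_pos : 0 < M).
Hypothesis h_lipschitz : forall x y, a <= x <= b -> a <= y <= b ->
  Rabs (h y - h x) <= M * Rabs (y - x).

Lemma lipschitz_attains_max :
  exists x, a <= x <= b /\ forall z, a <= z <= b -> h z <= h x.
Proof.
  set (hc := fun x => h (clamp a b x)).
  assert (Hcont : forall c, a <= c <= b -> continuity_pt hc c).
  { intros c _ eps Heps. exists (eps / M). split; [apply Rdiv_lt_0_compat; lra|].
    intros x [_ Hx]. simpl in *. unfold R_dist in *. unfold hc.
    pose proof (h_lipschitz (clamp a b c) (clamp a b x)
                  (clamp_in a b c a_le_b) (clamp_in a b x a_le_b)).
    pose proof (clamp_lipschitz a b x c a_le_b).
    assert (M * Rabs (x - c) < M * (eps / M)) by (apply Rmult_lt_compat_l; lra).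
    replace (M * (eps / M)) with eps in * by (field; lra).
    nra. }
  destruct (continuity_ab_maj hc a b a_le_b Hcont) as [x [Hmax Hx]].
  exists x. split; [assumption|]. intros z Hz.
  specialize (Hmax z Hz). unfold hc in Hmax. rewrite !clamp_id in Hmax by lra. exact Hmax.
Qed.

(* The supremum of the points where the maximum is attained is again such a
   point, by continuity. *)
Lemma lipschitz_largest_argmax :
  exists m, a <= m <= b /\ (forall z, a <= z <= b -> h z <= h m) /\
            (forall z, m < z <= b -> h z < h m).
Proof.
  destruct lipschitz_attains_max as [x [Hx Hmax]].
  set (S := fun z => a <= z <= b /\ h x <= h z).
  assert (HSb : bound S) by (exists b; intros z [Hz _]; lra).
  destruct (completeness S HSb (ex_intro _ x (conj Hx (Rle_refl _)))) as [m [Hub Hlub]].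
  assert (Hxm : x <= m) by (apply Hub; split; [assumption | apply Rle_refl]).
  assert (Hmb : m <= b) by (apply Hlub; intros z [Hz _]; lra).
  assert (Hhm : h x <= h m).
  { destruct (Rle_or_lt (h x) (h m)) as [|Hlt]; [assumption|]. exfalso.
    set (d := (h x - h m) / (2 * M)).
    assert (Hd : 0 < d) by (apply Rdiv_lt_0_compat; lra).
    assert (HMd : M * d = (h x - h m) / 2) by (unfold d; field; lra).
    destruct (classic (exists s, S s /\ m - d < s)) as [[s [[Hs Hhs] Hds]]|Hnone].
    - assert (s <= m) by (apply Hub; split; assumption).
      pose proof (h_lipschitz s m Hs ltac:(lra)) as Hl.
      rewrite (Rabs_right (m - s)) in Hl by lra.
      rewrite Rabs_minus_sym in Hl. pose proof (Rle_abs (h s - h m)). nra.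
    - assert (m <= m - d); [|lra].
      apply Hlub. intros s Hs. apply Rnot_lt_le. intros Hds. apply Hnone. exists s. auto. }
  exists m. split; [lra|]. split.
  - intros z Hz. specialize (Hmax z Hz). lra.
  - intros z [Hmz Hzb]. destruct (Rle_or_lt (h m) (h z)) as [Hle|]; [|assumption].
    exfalso. assert (z <= m) by (apply Hub; split; lra). lra.
Qed.

End LipschitzMax.

Definition room (C w D : R) : R := Rmin D (C - w).

Definition surplus (L K w : R) (g : R -> R) (z : R) : R := g z - Phi L K (w + z).

(* The largest maximiser is taken: when [g] has slope [L] where the price is
   flat, every point is a maximiser, and only the largest one fills the item. *)
Definition greedy_choice (C L K w : R) (it : item) (y : R) : Prop :=
  0 <= y <= room C w (fst it) /\
  (forall z, 0 <= z <= room C w (fst it) ->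
     surplus L K w (snd it) z <= surplus L K w (snd it) y) /\
  (forall z, y < z <= room C w (fst it) ->
     surplus L K w (snd it) z < surplus L K w (snd it) y).

Lemma room_cases C w D : room C w D = D /\ D <= C - w \/ room C w D = C - w /\ C - w <= D.
Proof. unfold room, Rmin. destruct (Rle_dec D (C - w)); [left | right]; lra. Qed.

Section GreedyChoice.
Variables C L U K : R.
Hypotheses (L_pos : 0 < L) (K_pos : 0 < K) (K_le_C : K <= C) (phi_C : phi L K C = U).

Lemma surplus_lipschitz w D g a b :
  assumptionA_item L U D g -> 0 <= w ->
  0 <= a <= room C w D -> 0 <= b <= room C w D ->
  Rabs (surplus L K w g b - surplus L K w g a) <= U * Rabs (b - a).
Proof.
  intros HA Hw.
  assert (Hle : forall a b, 0 <= a -> a <= b -> b <= room C w D ->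
            Rabs (surplus L K w g b - surplus L K w g a) <= U * (b - a)).
  { clear a b. intros a b Ha Hab Hb.
    assert (b <= D /\ b <= C - w) as [HbD HbC] by (destruct (room_cases C w D); lra).
    pose proof (assumptionA_secant_bounds L U D g a b HA Ha Hab HbD) as [G1 G2].
    pose proof (Phi_secant L K L_pos K_pos (w + a) (w + b) ltac:(lra)) as [P1 P2].
    replace (w + b - (w + a)) with (b - a) in P1, P2 by ring.
    pose proof (phi_ge L K L_pos K_pos (w + a)).
    pose proof (phi_le L K L_pos K_pos (w + b) C ltac:(lra)).
    unfold surplus. apply Rabs_le. split; nra. }
  intros Ha Hb. destruct (Rle_or_lt a b).
  - rewrite (Rabs_right (b - a)) by lra. apply Hle; lra.
  - rewrite Rabs_minus_sym, (Rabs_left (b - a)) by lra.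
    replace (- (b - a)) with (a - b) by ring. apply Hle; lra.
Qed.

Lemma greedy_choice_exists w it :
  assumptionA_item L U (fst it) (snd it) -> 0 <= w <= C ->
  exists y, greedy_choice C L K w it y.
Proof.
  intros HA Hw.
  assert (Hroom : 0 <= room C w (fst it)) by (destruct HA; destruct (room_cases C w (fst it)); lra).
  pose proof (phi_ge L K L_pos K_pos C).
  destruct (lipschitz_largest_argmax (surplus L K w (snd it)) 0 (room C w (fst it)) U Hroom
              ltac:(lra) (fun x y Hx Hy => surplus_lipschitz w _ _ x y HA ltac:(lra) Hx Hy))
    as [y Hy].
  exists y. exact Hy.
Qed.

Lemma greedy_choice_value w D g y :
  g 0 = 0 -> greedy_choice C L K w (D, g) y -> Phi L K (w + y) - Phi L K w <= g y.
Proof.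
  intros Hg0 [Hy [Hmax _]]. simpl in *.
  specialize (Hmax 0 ltac:(lra)). unfold surplus in Hmax.
  rewrite Hg0, Rplus_0_r in Hmax. lra.
Qed.

Lemma greedy_choice_full w D g y :
  assumptionA_item L U D g -> greedy_choice C L K w (D, g) y ->
  0 <= w -> w + y < K -> y = D.
Proof.
  intros HA [Hy [_ Hstrict]] Hw HwK. simpl in *.
  assert (Hyr : y = room C w D).
  { destruct (Rle_or_lt (room C w D) y) as [|Hlt]; [lra|]. exfalso.
    pose proof (Rmin_l (room C w D - y) (K - (w + y))).
    pose proof (Rmin_r (room C w D - y) (K - (w + y))).
    set (t := Rmin (room C w D - y) (K - (w + y))) in *.
    assert (0 < t) by (apply Rmin_glb_lt; lra).
    specialize (Hstrict (y + t) ltac:(lra)).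
    assert (y + t <= D) by (destruct (room_cases C w D); lra).
    pose proof (assumptionA_secant_bounds L U D g y (y + t) HA ltac:(lra) ltac:(lra) ltac:(lra)).
    unfold surplus in Hstrict. rewrite !Phi_flat in Hstrict by lra. nra. }
  destruct (room_cases C w D); lra.
Qed.

Lemma greedy_choice_slope w D g y z :
  assumptionA_item L U D g -> greedy_choice C L K w (D, g) y ->
  0 <= w -> y < z <= D -> g z - g y <= phi L K (w + y) * (z - y).
Proof.
  intros HA [Hy [Hmax _]] Hw Hz. simpl in *.
  destruct (Rle_or_lt (room C w D) y) as [Hfull|Hroom].
  - assert (HwyC : w + y = C) by (destruct (room_cases C w D); lra).
    rewrite HwyC, phi_C.
    apply (assumptionA_secant_bounds L U D g y z HA); lra.
  - pose proof (phi_ge L K L_pos K_pos (w + y)).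
    destruct HA as (_ & _ & _ & _ & Hconc & _).
    apply (le_of_forall_small_le_add _ _ (2 * phi L K (w + y) / K * (z - y))
             (Rmin (K / 2) (Rmin (z - y) (room C w D - y)))).
    { apply Rmin_glb_lt; [lra | apply Rmin_glb_lt; lra]. }
    { apply Rmult_le_pos; [apply Rmult_le_pos; [lra | left; apply Rinv_0_lt_compat, K_pos] | lra]. }
    intros t [Ht Htm].
    pose proof (Rmin_l (K / 2) (Rmin (z - y) (room C w D - y))).
    pose proof (Rmin_r (K / 2) (Rmin (z - y) (room C w D - y))).
    pose proof (Rmin_l (z - y) (room C w D - y)). pose proof (Rmin_r (z - y) (room C w D - y)).
    specialize (Hmax (y + t) ltac:(lra)). unfold surplus in Hmax.
    pose proof (Phi_secant L K L_pos K_pos (w + y) (w + (y + t)) ltac:(lra)) as [_ HPhi].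
    replace (w + (y + t) - (w + y)) with t in HPhi by ring.
    replace (w + (y + t)) with (w + y + t) in HPhi, Hmax by ring.
    pose proof (phi_add_le L K L_pos K_pos (w + y) t ltac:(lra)) as Hphi.
    pose proof (concave_secant_mono D g Hconc y (y + t) z ltac:(lra) ltac:(lra) ltac:(lra) ltac:(lra) ltac:(lra)) as Hsec.
    replace (y + t - y) with t in Hsec by ring.
    assert (Hinc : g (y + t) - g y <= t * (phi L K (w + y) + 2 * phi L K (w + y) / K * t)).
    { apply Rle_trans with (t * phi L K (w + y + t)); [lra|].
      apply Rmult_le_compat_l; lra. }
    apply Rmult_le_reg_l with t; [lra|].
    apply Rle_trans with ((g (y + t) - g y) * (z - y)); [assumption|].
    apply Rle_trans with (t * (phi L K (w + y) + 2 * phi L K (w + y) / K * t) * (z - y));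
      [apply Rmult_le_compat_r; lra | right; ring].
Qed.

Lemma greedy_choice_dual w D g y W ys :
  assumptionA_item L U D g -> greedy_choice C L K w (D, g) y ->
  0 <= w -> w + y <= W -> 0 <= ys <= D ->
  g ys <= g y - (Phi L K (w + y) - Phi L K w) + phi L K W * ys.
Proof.
  intros HA Hgr Hw HW Hys.
  pose proof Hgr as [Hy [Hmax _]]. simpl in *.
  destruct (Rle_or_lt ys y) as [Hle|Hlt].
  - specialize (Hmax ys ltac:(lra)). unfold surplus in Hmax.
    pose proof (Phi_secant L K L_pos K_pos w (w + ys) ltac:(lra)) as [_ HPhi].
    replace (w + ys - w) with ys in HPhi by ring.
    pose proof (phi_le L K L_pos K_pos (w + ys) W ltac:(lra)). nra.
  - pose proof (greedy_choice_slope w D g y ys HA Hgr Hw ltac:(lra)).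
    pose proof (Phi_secant L K L_pos K_pos w (w + y) ltac:(lra)) as [_ HPhi].
    replace (w + y - w) with y in HPhi by ring.
    pose proof (phi_le L K L_pos K_pos (w + y) W HW). nra.
Qed.

End GreedyChoice.

(** * The threshold algorithm *)

Definition greedy_take (C L K w : R) (it : item) : R :=
  epsilon (inhabits 0) (greedy_choice C L K w it).

Definition usage (C L K : R) (l : list item) : R :=
  fold_left (fun w it => w + greedy_take C L K w it) l 0.

Definition threshold_alg (C L K : R) : online_alg :=
  fun l => greedy_take C L K (usage C L K (removelast l)) (last l dflt_item).

Lemma firstn_S_nth {A : Type} (l : list A) n d : (n < length l)%nat ->
  firstn (S n) l = firstn n l ++ nth n l d :: nil.
Proof.
  revert n. induction l as [|a l IH]; intros n Hn; simpl in Hn; [lia|].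
  destruct n as [|n]; [reflexivity|].
  simpl. f_equal. apply IH. lia.
Qed.

Section ThresholdAlg.
Variables C L U K : R.
Hypotheses (L_pos : 0 < L) (K_pos : 0 < K) (K_le_C : K <= C) (phi_C : phi L K C = U).

Section Run.
Variable I : list item.
Hypothesis I_valid : valid_instance L U I.

Local Notation N := (length I).
Local Notation level n := (usage C L K (firstn n I)).
Local Notation y n := (decision (threshold_alg C L K) I n).

Lemma item_valid n : (n < N)%nat -> assumptionA_item L U (size_of I n) (val_of I n).
Proof. intros Hn. apply (proj1 (Forall_nth _ I) I_valid n dflt_item Hn). Qed.

Lemma decision_threshold_alg n : (n < N)%nat ->
  y n = greedy_take C L K (level n) (size_of I n, val_of I n).
Proof.
  intros Hn. unfold decision, threshold_alg, size_of, val_of.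
  rewrite (firstn_S_nth I n dflt_item Hn), removelast_last, last_last.
  destruct (nth n I dflt_item). reflexivity.
Qed.

Lemma level_S n : (n < N)%nat -> level (S n) = level n + y n.
Proof.
  intros Hn. rewrite decision_threshold_alg by assumption.
  unfold usage at 1. rewrite (firstn_S_nth I n dflt_item Hn), fold_left_app.
  unfold size_of, val_of. destruct (nth n I dflt_item). reflexivity.
Qed.

Lemma decision_greedy n : (n < N)%nat -> 0 <= level n <= C ->
  greedy_choice C L K (level n) (size_of I n, val_of I n) (y n).
Proof.
  intros Hn Hw. rewrite decision_threshold_alg by assumption. unfold greedy_take.
  apply epsilon_spec, (greedy_choice_exists C L U K); auto. apply item_valid, Hn.
Qed.

Lemma level_bounds n : (n <= N)%nat -> 0 <= level n <= C.
Proof.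
  induction n as [|n IH]; intros Hn; [unfold usage; simpl; lra|].
  pose proof (IH ltac:(lia)) as Hw.
  destruct (decision_greedy n ltac:(lia) Hw) as [Hy _]. simpl in Hy.
  rewrite level_S by lia.
  destruct (room_cases C (level n) (size_of I n)); lra.
Qed.

Lemma threshold_alg_greedy n : (n < N)%nat ->
  greedy_choice C L K (level n) (size_of I n, val_of I n) (y n).
Proof. intros Hn. apply decision_greedy, level_bounds; lia. Qed.

Lemma decision_nonneg n : (n < N)%nat -> 0 <= y n.
Proof. intros Hn. apply (threshold_alg_greedy n Hn). Qed.

Lemma level_le n m : (n <= m <= N)%nat -> level n <= level m.
Proof.
  induction m as [|m IH]; intros Hnm; [replace n with O by lia; lra|].
  destruct (Nat.eq_dec n (S m)) as [->|Hne]; [lra|].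
  rewrite level_S by lia. pose proof (decision_nonneg m ltac:(lia)).
  pose proof (IH ltac:(lia)). lra.
Qed.

Lemma level_eq_rsum n : (n <= N)%nat -> level n = rsum (fun k => y k) n.
Proof.
  induction n as [|n IH]; intros Hn; [reflexivity|].
  rewrite level_S by lia. simpl. rewrite IH by lia. reflexivity.
Qed.

Lemma Phi_level_le_ALG : Phi L K (level N) <= ALG (threshold_alg C L K) I.
Proof.
  unfold ALG, value.
  replace (Phi L K (level N)) with (Phi L K (level N) - Phi L K (level O))
    by (unfold usage; simpl; rewrite Phi_0; [ring | assumption]).
  rewrite <- (rsum_telescope (fun n => Phi L K (level n))).
  apply rsum_le. intros n Hn. rewrite level_S by assumption.
  destruct (item_valid n Hn) as (_ & Hg0 & _).
  apply (greedy_choice_value C L K _ (size_of I n)); [assumption|].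
  apply threshold_alg_greedy, Hn.
Qed.

Lemma opt_le_ALG_below_K ys : offline_feasible C I ys -> level N < K ->
  value I ys <= ALG (threshold_alg C L K) I.
Proof.
  intros [Hys _] HK. unfold ALG, value.
  apply rsum_le. intros n Hn.
  assert (Hfull : y n = size_of I n).
  { apply (greedy_choice_full C L U K K_le_C (level n) (size_of I n) (val_of I n)); auto.
    - apply item_valid, Hn.
    - apply threshold_alg_greedy, Hn.
    - apply level_bounds; lia.
    - rewrite <- level_S by assumption. pose proof (level_le (S n) N ltac:(lia)). lra. }
  rewrite Hfull.
  destruct (item_valid n Hn) as (HD & _ & _ & Hmono & _).
  pose proof (Hys n Hn). apply Hmono; lra.
Qed.

Lemma opt_le_ALG_dual ys : offline_feasible C I ys ->
  value I ys <= ALG (threshold_alg C L K) I - Phi L K (level N) + phi L K (level N) * C.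
Proof.
  intros [Hys Hsum]. unfold ALG, value.
  pose proof (phi_ge L K L_pos K_pos (level N)).
  apply Rle_trans with
    (rsum (fun n => val_of I n (y n) - (Phi L K (level (S n)) - Phi L K (level n))
                    + phi L K (level N) * ys n) N).
  - apply rsum_le. intros n Hn. rewrite level_S by assumption.
    apply (greedy_choice_dual C L U K L_pos K_pos phi_C _ (size_of I n)); auto.
    + apply item_valid, Hn.
    + apply threshold_alg_greedy, Hn.
    + apply level_bounds; lia.
    + rewrite <- level_S by assumption. apply level_le; lia.
  - rewrite rsum_plus, rsum_minus, rsum_scal, (rsum_telescope (fun n => Phi L K (level n))).
    replace (level O) with 0 by reflexivity. rewrite Phi_0 by assumption.
    assert (phi L K (level N) * rsum ys N <= phi L K (level N) * C)
      by (apply Rmult_le_compat_l; lra).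
    lra.
Qed.

End Run.

Lemma threshold_alg_feasible : online_feasible C L U (threshold_alg C L K).
Proof.
  intros I HI. split.
  - intros n Hn. destruct (threshold_alg_greedy I HI n Hn) as [Hy _]. simpl in Hy.
    destruct (room_cases C (usage C L K (firstn n I)) (size_of I n)); lra.
  - rewrite <- level_eq_rsum by (assumption || lia). apply level_bounds; auto.
Qed.

Lemma threshold_alg_competitive : competitive C L U (threshold_alg C L K) (C / K).
Proof.
  intros I HI ys Hys.
  set (W := usage C L K (firstn (length I) I)).
  pose proof (Phi_level_le_ALG I HI) as HALG. fold W in HALG.
  assert (HCK : 1 <= C / K).
  { apply Rmult_le_reg_r with K; [lra|]. replace (C / K * K) with C by (field; lra). lra. }
  assert (0 <= W) by (apply (level_bounds I HI); lia).
  assert (0 <= Phi L K W).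
  { pose proof (Phi_secant L K L_pos K_pos 0 W ltac:(lra)) as [HP _].
    rewrite Phi_0 in HP by assumption. pose proof (phi_ge L K L_pos K_pos 0). nra. }
  destruct (Rlt_or_le W K) as [HWK|HKW].
  - pose proof (opt_le_ALG_below_K I HI ys Hys HWK). nra.
  - pose proof (opt_le_ALG_dual I HI ys Hys) as Hdual. fold W in Hdual.
    rewrite (Phi_eq_mul_phi L K K_pos W HKW) in *.
    replace (phi L K W * C) with (C / K * (K * phi L K W)) in Hdual by (field; lra).
    nra.
Qed.

End ThresholdAlg.

(** * The lower bound *)

Definition linear_item (C p : R) : item := (C, fun x => p * x).

Definition linear_instance (C : R) (p : nat -> R) (n : nat) : list item :=
  map (fun j => linear_item C (p j)) (seq 0 n).

Lemma linear_item_valid L U C p : 0 < C -> 0 <= L <= p -> p <= U ->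
  assumptionA_item L U C (fun x => p * x).
Proof.
  intros HC Hp HpU.
  repeat split; try (intros; nra); try lra.
  exists (fun _ => p). split; [|intros; lra].
  intros x Hx eps Heps. exists 1. split; [lra|].
  intros z [[Hz Hzx] _]. simpl. unfold R_dist.
  replace ((p * z - p * x) / (z - x) - p) with 0 by (field; lra).
  rewrite Rabs_R0. lra.
Qed.

Lemma length_linear_instance C p n : length (linear_instance C p n) = n.
Proof. unfold linear_instance. rewrite length_map, length_seq. reflexivity. Qed.

Lemma nth_linear_instance C p n j : (j < n)%nat ->
  nth j (linear_instance C p n) dflt_item = linear_item C (p j).
Proof.
  intros Hj. unfold linear_instance.
  rewrite (nth_indep _ _ (linear_item C (p O))) by (rewrite length_map, length_seq; lia).
  rewrite (map_nth (fun j => linear_item C (p j))), seq_nth by lia. reflexivity.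
Qed.

Lemma firstn_linear_instance C p n k : (k <= n)%nat ->
  firstn k (linear_instance C p n) = linear_instance C p k.
Proof.
  intros Hk. unfold linear_instance. rewrite firstn_map. f_equal.
  replace n with (k + (n - k))%nat by lia.
  rewrite seq_app, firstn_app, length_seq, Nat.sub_diag, firstn_O, app_nil_r.
  apply firstn_all2. rewrite length_seq. lia.
Qed.

Lemma linear_instance_valid L U C p n : 0 < C -> 0 <= L ->
  (forall j, (j < n)%nat -> L <= p j <= U) -> valid_instance L U (linear_instance C p n).
Proof.
  intros HC HL Hp. unfold valid_instance, linear_instance.
  apply Forall_map, Forall_forall. intros j Hj. apply in_seq in Hj.
  destruct (Hp j ltac:(lia)). simpl. apply linear_item_valid; lra.
Qed.

Section LinearInstances.
Variables (C L U c : R) (alg : online_alg).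
Hypotheses (C_pos : 0 < C) (L_nonneg : 0 <= L).
Hypotheses (alg_feasible : online_feasible C L U alg) (alg_competitive : competitive C L U alg c).
Variables (p : nat -> R) (n : nat).
Hypothesis p_range : forall j, (j < n)%nat -> L <= p j <= U.

Local Notation y i := (alg (linear_instance C p (S i))).

Lemma decision_linear_instance k i : (i < k <= n)%nat ->
  decision alg (linear_instance C p k) i = y i.
Proof.
  intros Hik. unfold decision. rewrite firstn_linear_instance by lia. reflexivity.
Qed.

Lemma linear_instance_decisions :
  (forall i, (i < n)%nat -> 0 <= y i) /\ rsum (fun i => y i) n <= C.
Proof.
  destruct (alg_feasible (linear_instance C p n) (linear_instance_valid L U C p n C_pos L_nonneg p_range))
    as [Hy Hsum].
  rewrite length_linear_instance in Hy, Hsum. split.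
  - intros i Hi. rewrite <- (decision_linear_instance n i) by lia. apply Hy, Hi.
  - erewrite rsum_ext; [exact Hsum|]. intros i Hi. symmetry. apply decision_linear_instance. lia.
Qed.

(* Offline, all the capacity can go to the last (most expensive) item. *)
Lemma linear_instance_prefix_competitive k : (k < n)%nat ->
  p k * C <= c * rsum (fun i => p i * y i) (S k).
Proof.
  intros Hk.
  set (Ik := linear_instance C p (S k)).
  set (ys := fun i => if Nat.eqb i k then C else 0).
  assert (HIk : valid_instance L U Ik)
    by (apply linear_instance_valid; auto; intros j Hj; apply p_range; lia).
  assert (Hlen : length Ik = S k) by apply length_linear_instance.
  assert (Hnth : forall i, (i < S k)%nat -> nth i Ik dflt_item = linear_item C (p i))
    by (intros; apply nth_linear_instance; assumption).
  assert (Hys : offline_feasible C Ik ys).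
  { split; rewrite Hlen.
    - intros i Hi. unfold size_of. rewrite Hnth by assumption. simpl.
      unfold ys. destruct (Nat.eqb i k); lra.
    - unfold ys. rewrite (rsum_indicator (fun _ => C)) by lia. lra. }
  pose proof (alg_competitive Ik HIk ys Hys) as H.
  unfold ALG, value in H. rewrite Hlen in H.
  replace (p k * C) with (rsum (fun i => val_of Ik i (ys i)) (S k)).
  - eapply Rle_trans; [exact H|]. right. f_equal. apply rsum_ext. intros i Hi.
    unfold val_of. rewrite Hnth by lia. unfold Ik. rewrite decision_linear_instance by lia. reflexivity.
  - rewrite <- (rsum_indicator (fun i => p i * C) k (S k)) by lia.
    apply rsum_ext. intros i Hi. unfold val_of. rewrite Hnth by assumption. simpl.
    unfold ys. destruct (Nat.eqb_spec i k); [subst; reflexivity | ring].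
Qed.

End LinearInstances.

Lemma geometric_abel (p y : nat -> R) (r c C : R) m :
  (forall j, 0 < p j) -> (forall j, p (S j) = r * p j) -> 1 <= r ->
  (forall k, (k <= m)%nat -> p k * C <= c * rsum (fun i => p i * y i) (S k)) ->
  C * INR m * (1 - / r) + c * rsum (fun i => p i * y i) (S m) / p m <= c * rsum y (S m).
Proof.
  intros Hp HpS Hr Hcomp.
  assert (Hq : 0 <= 1 - / r).
  { assert (/ r <= / 1) by (apply Rinv_le_contravar; lra). rewrite Rinv_1 in *. lra. }
  induction m as [|m IH].
  - simpl. pose proof (Hp O). right. field. lra.
  - specialize (IH (fun k Hk => Hcomp k ltac:(lia))).
    pose proof (Hp m). pose proof (Hcomp m ltac:(lia)).
    set (S_m := rsum (fun i => p i * y i) (S m)) in *.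
    set (q := 1 - / r) in *.
    assert (HC : C <= c * S_m / p m).
    { apply Rmult_le_reg_r with (p m); [lra|].
      replace (c * S_m / p m * p m) with (c * S_m) by (field; lra). lra. }
    change (rsum (fun i => p i * y i) (S (S m))) with (S_m + p (S m) * y (S m)).
    change (rsum y (S (S m))) with (rsum y (S m) + y (S m)).
    rewrite S_INR, HpS.
    assert (Hsplit : c * (S_m + r * p m * y (S m)) / (r * p m) = c * S_m / p m * (1 - q) + c * y (S m))
      by (unfold q; field; lra).
    rewrite Hsplit.
    assert (C * q <= c * S_m / p m * q) by (apply Rmult_le_compat_r; lra).
    nra.
Qed.

Section LowerBound.
Variables (C L U c : R) (alg : online_alg).
Hypotheses (C_pos : 0 < C) (L_pos : 0 < L) (L_le_U : L <= U).
Hypotheses (alg_feasible : online_feasible C L U alg) (alg_competitive : competitive C L U alg c).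

Lemma ratio_ge_geometric_ladder r m : 1 <= r -> L * r ^ m = U -> 1 + INR m * (1 - / r) <= c.
Proof.
  intros Hr HU.
  set (p := fun j => L * r ^ j).
  assert (Hp : forall j, 0 < p j) by (intros j; unfold p; pose proof (pow_R1_Rle r j Hr); nra).
  assert (p_range : forall j, (j < S m)%nat -> L <= p j <= U).
  { intros j Hj. unfold p. rewrite <- HU. pose proof (pow_R1_Rle r j Hr).
    pose proof (Rle_pow r j m Hr ltac:(lia)). split; nra. }
  pose proof (linear_instance_prefix_competitive C L U c alg C_pos ltac:(lra)
                alg_competitive p (S m) p_range) as Hcomp.
  destruct (linear_instance_decisions C L U alg C_pos ltac:(lra) alg_feasible p (S m) p_range)
    as [Hy Hsum].
  set (y := fun i => alg (linear_instance C p (S i))).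
  change (forall i, (i < S m)%nat -> 0 <= y i) in Hy.
  change (forall k, (k < S m)%nat -> p k * C <= c * rsum (fun i => p i * y i) (S k)) in Hcomp.
  pose proof (geometric_abel p y r c C m Hp ltac:(intros; unfold p; simpl; ring) Hr
                (fun k Hk => Hcomp k ltac:(lia))) as Habel.
  assert (Hc : 0 <= c).
  { pose proof (Hcomp O ltac:(lia)) as H0. simpl in H0.
    assert (0 <= p O * y O) by (pose proof (Hy O ltac:(lia)); pose proof (Hp O); nra).
    destruct (Rle_or_lt 0 c) as [|Hneg]; [assumption|]. pose proof (Hp O). nra. }
  assert (C <= c * rsum (fun i => p i * y i) (S m) / p m).
  { pose proof (Hcomp m ltac:(lia)). apply Rmult_le_reg_r with (p m); [apply Hp|].
    replace (c * rsum (fun i => p i * y i) (S m) / p m * p m)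
      with (c * rsum (fun i => p i * y i) (S m)) by (pose proof (Hp m); field; lra).
    lra. }
  assert (c * rsum y (S m) <= c * C) by (apply Rmult_le_compat_l; assumption).
  apply Rmult_le_reg_r with C; [assumption|]. nra.
Qed.

Lemma competitive_ratio_lower_bound : 1 + ln (U / L) <= c.
Proof.
  set (a := ln (U / L)).
  assert (Ha : 0 <= a) by (apply ln_div_nonneg; assumption).
  apply (le_of_forall_nat_le_sub_div _ (a * a)); [nra|]. intros m Hm.
  assert (Hmpos : 0 < INR m) by (apply lt_0_INR, Hm).
  set (x := a / INR m).
  assert (Hx : 0 <= x) by (apply Rmult_le_pos; [lra | left; apply Rinv_0_lt_compat, Hmpos]).
  assert (Hr : 1 <= exp x) by (pose proof (exp_ineq1_le x); lra).
  assert (HU : L * exp x ^ m = U).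
  { rewrite pow_exp. unfold x. replace (INR m * (a / INR m)) with a by (field; lra).
    unfold a. rewrite exp_ln by (apply Rdiv_lt_0_compat; lra). field. lra. }
  pose proof (ratio_ge_geometric_ladder (exp x) m Hr HU).
  pose proof (one_sub_inv_exp_ge x Hx).
  assert (INR m * (x - x * x) = a - a * a / INR m) by (unfold x; field; lra).
  assert (INR m * (x - x * x) <= INR m * (1 - / exp x)) by (apply Rmult_le_compat_l; lra).
  lra.
Qed.

End LowerBound.

Lemma threshold_alg_optimal C L U : 0 < C -> 0 < L -> L <= U ->
  let K := C / (1 + ln (U / L)) in
  online_feasible C L U (threshold_alg C L K) /\
  competitive C L U (threshold_alg C L K) (1 + ln (U / L)).
Proof.
  intros HC HL HLU K.
  pose proof (ln_div_nonneg L U HL HLU) as Ha.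
  assert (HK : 0 < K) by (apply Rdiv_lt_0_compat; lra).
  assert (HCK : C / K = 1 + ln (U / L)) by (unfold K; field; lra).
  assert (HKC : K <= C).
  { apply Rmult_le_reg_r with (1 + ln (U / L)); [lra|].
    unfold K. replace (C / (1 + ln (U / L)) * (1 + ln (U / L))) with C by (field; lra). nra. }
  assert (HphiC : phi L K C = U).
  { rewrite phi_exp, HCK by assumption. replace (1 + ln (U / L) - 1) with (ln (U / L)) by ring.
    rewrite exp_ln by (apply Rdiv_lt_0_compat; lra). field. lra. }
  split.
  - apply (threshold_alg_feasible C L U K HL HK HKC HphiC).
  - rewrite <- HCK. apply (threshold_alg_competitive C L U K HL HK HKC HphiC).
Qed.

Theorem theorem2 (C L U : R) :
  0 < C -> 0 < L -> L <= U ->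
  (exists alg : online_alg,
      online_feasible C L U alg /\ competitive C L U alg (1 + ln (U / L))) /\
  (forall (alg : online_alg) (c : R),
      online_feasible C L U alg -> competitive C L U alg c ->
      1 + ln (U / L) <= c).
Proof.
  intros HC HL HLU. split.
  - eexists. apply (threshold_alg_optimal C L U HC HL HLU).
  - intros alg c Hf Hc. apply (competitive_ratio_lower_bound C L U c alg HC HL HLU Hf Hc).
Qed.
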